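(* Assume (A.a). Let $\beta\in[0,1)$, $\lambda\in\mathbb R$, $\{\alpha_k\}_k\subset(0,\infty)$, and let the sequences be generated by RRM. For $k\ge1$ let $\sigma_k^2:=\frac1n\sum_{t=1}^n\|\nabla f_t(z^k)-\nabla f(z^k)\|^2$. (a) For all $k\ge1$, $i\in\{1,\dots,m\}$ and $a=(a_1,\dots,a_i)\in\mathbb R_+^i$ (and arbitrary permutations), \[ \Big\|\sum_{t=1}^i a_td_t^k\Big\|^2\le 3\|a\|_1\|a\|_\infty\Big[L^2\sum_{t=1}^m\|\hat y_t^k-z^k\|^2+m\sigma_k^2\Big]+3\|a\|_1^2\|\nabla f(z^k)\|^2 . \] (b) If in addition (A.c) holds, then for all such $k,i,a$, \[ \mathbb E_k\Big[\Big\|\sum_{t=1}^i a_td_t^k\Big\|^2\Big]\le 3\|a\|_1\|a\|_\infty\Big[L^2\sum_{t=1}^m\mathbb E_k[\|\hat y_t^k-z^k\|^2]+b^{-1}\sigma_k^2\Big]+3\|a\|_1^2\|\nabla f(z^k)\|^2 . \]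
   Context: Let $n,d\in\mathbb N$, $f_1,\dots,f_n:\mathbb R^d\to\mathbb R$ continuously differentiable, $f:=\frac1n\sum_{i=1}^n f_i$, $[n]:=\{1,\dots,n\}$. Fix a mini-batch size $b\in\mathbb N$ with $m:=n/b\in\mathbb N$. Random reshuffling with momentum (RRM) with step sizes $\{\alpha_k\}_{k\ge1}\subset(0,\infty)$ and parameters $\beta,\lambda$ generates sequences as follows: start with $x^1=\tilde x^1\in\mathbb R^d$; for each $k=1,2,\dots$ choose a permutation $\pi^k=(\pi^k_1,\dots,\pi^k_n)$ of $[n]$, set $y_0^k=\tilde x^k$, $y_1^k=x^k$, and for $i=1,\dots,m$ compute $\hat y_i^k=y_i^k+\lambda(y_i^k-y_{i-1}^k)$, $d_i^k=\frac1b\sum_{j=(i-1)b+1}^{ib}\nabla f_{\pi^k_j}(\hat y_i^k)$, $y_{i+1}^k=y_i^k-\alpha_kd_i^k+\beta(y_i^k-y_{i-1}^k)$; then set $\tilde x^{k+1}=y_m^k$, $x^{k+1}=y_{m+1}^k$. The proxy iterates are $z^k:=\frac{1}{1-\beta}x^k-\frac{\beta}{1-\beta}\tilde x^k$. Assumption (A.a): there are $L>0$ and $\bar f\in\mathbb R$ such that each $\nabla f_i$ is $L$-Lipschitz and $f_i(x)\ge\bar f$ for all $x\in\mathbb R^d$, $i\in[n]$. Assumption (A.c): the permutations $\pi^1,\pi^2,\dots$ are independent and each is uniformly distributed over all permutations of $[n]$. $\mathbb E_k[\cdot]$ denotes conditional expectation given $\pi^1,\dots,\pi^{k-1}$ (so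 $x^k,\tilde x^k,z^k$ are fixed and only $\pi^k$ is random). $\|\cdot\|_1,\|\cdot\|_\infty$ are the $\ell_1$ and $\ell_\infty$ norms. *)

From HB Require Import structures.
From mathcomp Require Import all_boot all_order all_algebra all_fingroup.
From mathcomp Require Import all_classical all_reals all_analysis.
Set Implicit Arguments. Unset Strict Implicit. Unset Printing Implicit Defensive.
Import Order.TTheory GRing.Theory Num.Theory.
Import numFieldNormedType.Exports.
Local Open Scope ring_scope.

Section RRM.
Variables (R : realType) (d n : nat).

Definition dotv (u v : 'rV[R]_d) : R := \sum_(j < d) u 0 j * v 0 j.
Definition sqnorm (v : 'rV[R]_d) : R := \sum_(j < d) v 0 j ^+ 2.
Definition enorm (v : 'rV[R]_d) : R := Num.sqrt (sqnorm v).

(* grad i = the gradient of f_i, i ranging over 'I_n = {0..n-1} (index i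
   stands for f_{i+1} of the paper). *)
Variable grad : 'I_n -> 'rV[R]_d -> 'rV[R]_d.

Definition gradf (x : 'rV[R]_d) : 'rV[R]_d := n%:R^-1 *: \sum_(i < n) grad i x.

Definition sigma2 (z : 'rV[R]_d) : R :=
  n%:R^-1 * \sum_(t < n) sqnorm (grad t z - gradf z).

Variables (b : nat) (beta lam : R).

(* One inner step.  Given (y_{i-1}, y_i):
     yhat_i = y_i + lam (y_i - y_{i-1}),
     d_i = (1/b) sum_{j=(i-1)b+1}^{ib} grad_{pi_j}(yhat_i)
   (paper position j in 1..n is the ordinal j-1 here). *)
Definition yhat_of (Y : 'rV[R]_d * 'rV[R]_d) : 'rV[R]_d :=
  Y.2 + lam *: (Y.2 - Y.1).

Definition dir_of (p : {perm 'I_n}) (i : nat) (Y : 'rV[R]_d * 'rV[R]_d) : 'rV[R]_d :=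
  b%:R^-1 *: \sum_(j < n | ((i.-1 * b <= j) && (j < i * b))%N) grad (p j) (yhat_of Y).

(* inner p alpha x xt i = (y_i, y_{i+1}) for the epoch with permutation p,
   step size alpha, started from x^k = x and xtilde^k = xt. *)
Fixpoint inner (p : {perm 'I_n}) (alpha : R) (x xt : 'rV[R]_d) (i : nat)
  : 'rV[R]_d * 'rV[R]_d :=
  match i with
  | 0 => (xt, x)
  | i'.+1 =>
      let Y := inner p alpha x xt i' in
      (Y.2, Y.2 - alpha *: dir_of p i'.+1 Y + beta *: (Y.2 - Y.1))
  end.

Definition yhat p alpha x xt (i : nat) : 'rV[R]_d :=
  yhat_of (inner p alpha x xt i.-1).
Definition dir p alpha x xt (i : nat) : 'rV[R]_d :=
  dir_of p i (inner p alpha x xt i.-1).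

Variable m : nat.

(* Outer loop: outer pi alpha x1 j = (x^{j+1}, xtilde^{j+1});
   epoch k uses permutation pi k and step size alpha k, and
   xtilde^{k+1} = y_m^k, x^{k+1} = y_{m+1}^k. *)
Fixpoint outer (pi : nat -> {perm 'I_n}) (alpha : nat -> R) (x1 : 'rV[R]_d)
  (j : nat) : 'rV[R]_d * 'rV[R]_d :=
  match j with
  | 0 => (x1, x1)
  | j'.+1 =>
      let X := outer pi alpha x1 j' in
      let Y := inner (pi j) (alpha j) X.1 X.2 m in
      (Y.2, Y.1)
  end.

Definition xk pi alpha x1 (k : nat) : 'rV[R]_d := (outer pi alpha x1 k.-1).1.
Definition xtk pi alpha x1 (k : nat) : 'rV[R]_d := (outer pi alpha x1 k.-1).2.

Definition zk pi alpha x1 (k : nat) : 'rV[R]_d :=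
  (1 - beta)^-1 *: xk pi alpha x1 k - (beta / (1 - beta)) *: xtk pi alpha x1 k.

End RRM.

(* Conditional expectation E_k under (A.c): pi^k is uniform over all
   permutations of 'I_n and independent of pi^1..pi^{k-1}, while the
   integrand depends on the past only through x^k, xtilde^k.  Hence E_k of a
   quantity F(pi^k) is the uniform average over all permutations. *)
Definition Eperm (R : realType) (n : nat) (F : {perm 'I_n} -> R) : R :=
  (#|{: {perm 'I_n}}|%:R)^-1 * \sum_(p : {perm 'I_n}) F p.

From HB Require Import structures.
From mathcomp Require Import all_boot all_order all_algebra all_fingroup.
From mathcomp Require Import all_classical all_reals all_analysis.
From mathcomp Require Import ring lra zify.

Set Implicit Arguments.
Unset Strict Implicit.
Unset Printing Implicit Defensive.
Import Order.TTheory GRing.Theory Num.Theory.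
Import numFieldNormedType.Exports.
Local Open Scope ring_scope.

(* Write [\sum_t a_t d_t] as a weighted sum of the gradients [grad (p j)] at
   the extrapolated points and split each one as
   [(grad_{p j}(yhat_t) - grad_{p j}(z)) + (grad_{p j}(z) - grad f(z)) + grad f(z)].
   By [|u + v + w|^2 <= 3 (|u|^2 + |v|^2 + |w|^2)] and weighted Cauchy-Schwarz,
   the first part is controlled by L-smoothness and the last one is
   [|a|_1 grad f(z)].  Every position [j] lies in at most one batch, so its
   total weight [w_j] is at most [|a|_inf / b] while all weights add up to
   [|a|_1]; this bounds the middle part by [|a|_1 |a|_inf m sigma^2] for any
   permutation.  For a uniform permutation the centred gradients are sampled
   without replacement, so distinct positions are nonpositively correlated and
   only the diagonal [\sum_j w_j^2 sigma^2 <= |a|_1 |a|_inf sigma^2 / b]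
   survives. *)

Section WeightedSums.
Variable R : realType.

Lemma sqrrD3_le (x y z : R) : (x + y + z) ^+ 2 <= 3 * (x ^+ 2 + y ^+ 2 + z ^+ 2).
Proof.
have := sqr_ge0 (x - y); have := sqr_ge0 (y - z); have := sqr_ge0 (x - z).
rewrite !sqrrB !sqrrD; lra.
Qed.

(* The gap is half of [\sum_(k, l) W k * W l * (v k - v l) ^+ 2]. *)
Lemma wcauchy_schwarz (I : finType) (W v : I -> R) : (forall k, 0 <= W k) ->
  (\sum_k W k * v k) ^+ 2 <= (\sum_k W k) * \sum_k W k * v k ^+ 2.
Proof.
move=> W_ge0.
have gapE : \sum_k \sum_l W k * W l * (v k - v l) ^+ 2 =
    2 * ((\sum_k W k) * (\sum_k W k * v k ^+ 2) - (\sum_k W k * v k) ^+ 2).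
  transitivity (\sum_k \sum_l (W k * (W l * v l ^+ 2) + (W k * v k ^+ 2) * W l
      - 2 * (W k * v k * (W l * v l)))).
    by apply: eq_bigr => k _; apply: eq_bigr => l _; ring.
  under eq_bigr => k _ do rewrite sumrB big_split /= -!mulr_sumr.
  by rewrite sumrB big_split /= -!mulr_suml -mulr_sumr -mulr_suml expr2; ring.
have : 0 <= \sum_k \sum_l W k * W l * (v k - v l) ^+ 2.
  by do 2!apply: sumr_ge0 => ? _; rewrite mulr_ge0 ?sqr_ge0 ?mulr_ge0.
rewrite gapE; lra.
Qed.

End WeightedSums.

Section SquaredNorm.
Variables (R : realType) (d : nat).
Implicit Types (u v w : 'rV[R]_d) (c : R).

Lemma sqnorm_ge0 v : 0 <= sqnorm v.
Proof. by apply: sumr_ge0 => j _; exact: sqr_ge0. Qed.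

Lemma sqnormZ c v : sqnorm (c *: v) = c ^+ 2 * sqnorm v.
Proof. by rewrite /sqnorm mulr_sumr; apply: eq_bigr => j _; rewrite mxE exprMn. Qed.

Lemma sqnormD3_le u v w : sqnorm (u + v + w) <= 3 * (sqnorm u + sqnorm v + sqnorm w).
Proof.
rewrite /sqnorm -!big_split mulr_sumr /=; apply: ler_sum => j _.
by rewrite !mxE sqrrD3_le.
Qed.

Lemma sqnorm_wsumE (I : finType) (W : I -> R) (v : I -> 'rV[R]_d) :
  sqnorm (\sum_k W k *: v k) = \sum_j (\sum_k W k * v k 0 j) ^+ 2.
Proof. by apply: eq_bigr => j _; rewrite summxE; under eq_bigr do rewrite mxE. Qed.

Lemma sqnorm_wsum_le (I : finType) (W : I -> R) (v : I -> 'rV[R]_d) :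
  (forall k, 0 <= W k) ->
  sqnorm (\sum_k W k *: v k) <= (\sum_k W k) * \sum_k W k * sqnorm (v k).
Proof.
move=> W_ge0; rewrite sqnorm_wsumE.
apply: le_trans (ler_sum _ (fun j _ => wcauchy_schwarz (fun k => v k 0 j) W_ge0)) _.
rewrite -mulr_sumr exchange_big /=.
by under [X in _ <= _ * X]eq_bigr do rewrite mulr_sumr.
Qed.

Lemma sqnorm_le_of_enorm_le L u v : enorm u <= L * enorm v -> sqnorm u <= L ^+ 2 * sqnorm v.
Proof.
move=> le_uv; rewrite -(sqr_sqrtr (sqnorm_ge0 u)) -(sqr_sqrtr (sqnorm_ge0 v)) -exprMn.
by apply: lerXn2r; rewrite ?nnegrE ?sqrtr_ge0 // (le_trans (sqrtr_ge0 _) le_uv).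
Qed.

End SquaredNorm.

Section UniformPermutation.
Variables (R : realType) (n : nat).
Implicit Types (F G : {perm 'I_n} -> R) (c : R).

Lemma card_perm_gt0 : (0 < #|{: {perm 'I_n}}|)%N.
Proof. by apply/card_gt0P; exists 1%g. Qed.

Lemma eq_Eperm F G : (forall p, F p = G p) -> Eperm F = Eperm G.
Proof. by move=> eqFG; rewrite /Eperm (eq_bigr _ (fun p _ => eqFG p)). Qed.

Lemma ler_Eperm F G : (forall p, F p <= G p) -> Eperm F <= Eperm G.
Proof. by move=> leFG; rewrite ler_wpM2l ?invr_ge0 ?ler0n // ler_sum. Qed.

Lemma EpermD F G : Eperm (fun p => F p + G p) = Eperm F + Eperm G.
Proof. by rewrite /Eperm big_split mulrDr. Qed.

Lemma EpermZ c F : Eperm (fun p => c * F p) = c * Eperm F.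
Proof. by rewrite /Eperm -mulr_sumr mulrCA. Qed.

Lemma Eperm_sum (I : finType) (F : {perm 'I_n} -> I -> R) :
  Eperm (fun p => \sum_k F p k) = \sum_k Eperm (fun p => F p k).
Proof. by rewrite /Eperm exchange_big mulr_sumr. Qed.

Lemma Eperm_cst c : Eperm (fun _ : {perm 'I_n} => c) = c.
Proof.
rewrite /Eperm sumr_const -[c *+ _]mulr_natl mulKf //.
by rewrite pnatr_eq0 -lt0n card_perm_gt0.
Qed.

Lemma Eperm_ge0 F : (forall p, 0 <= F p) -> 0 <= Eperm F.
Proof. by move=> F_ge0; rewrite -(Eperm_cst 0) ler_Eperm. Qed.

Lemma Eperm_tperm F (j j' : 'I_n) : Eperm F = Eperm (fun p => F (tperm j j' * p)%g).
Proof. by rewrite /Eperm (reindex_inj (mulgI (tperm j j'))). Qed.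

Lemma Eperm_eval (h : 'I_n -> R) (j : 'I_n) :
  Eperm (fun p => h (p j)) = n%:R^-1 * \sum_s h s.
Proof.
have n_neq0 : n%:R != 0 :> R by rewrite pnatr_eq0 -lt0n (leq_ltn_trans _ (ltn_ord j)).
have eval_j j0 : Eperm (fun p => h (p j0)) = Eperm (fun p => h (p j)).
  by rewrite (Eperm_tperm _ j0 j); apply: eq_Eperm => q; rewrite permM tpermL.
apply: (mulfI n_neq0); rewrite [RHS]mulrA mulfV // mul1r.
rewrite mulr_natl -[X in _ *+ X](card_ord n) -sumr_const -(eq_bigr _ (fun j0 _ => eval_j j0)).
rewrite -Eperm_sum -[RHS]Eperm_cst; apply: eq_Eperm => p.
by rewrite [RHS](reindex_inj (@perm_inj _ p)).
Qed.

(* All off-diagonal correlations are equal, and together with the diagonal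
   one they sum to [E (h (p j) * \sum_s h s) = 0]. *)
Lemma Eperm_cross_le0 (h : 'I_n -> R) (j j' : 'I_n) : j != j' -> \sum_s h s = 0 ->
  Eperm (fun p => h (p j) * h (p j')) <= 0.
Proof.
move=> neq_jj' sum_h0; set T := Eperm _.
have eq_T j'' : j'' != j -> Eperm (fun p => h (p j) * h (p j'')) = T.
  move=> neq_j''j; rewrite /T (Eperm_tperm _ j' j''); apply: eq_Eperm => q.
  by rewrite !permM tpermR tpermD // eq_sym.
have n_gt1 : (1 < n)%N.
  by move: neq_jj' (ltn_ord j) (ltn_ord j'); rewrite -val_eqE /=; lia.
have : \sum_j'' Eperm (fun p => h (p j) * h (p j'')) = 0.
  rewrite -Eperm_sum -[RHS](Eperm_cst 0); apply: eq_Eperm => p.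
  have sum_hp0 : \sum_j'' h (p j'') = 0.
    by rewrite -[RHS]sum_h0 [RHS](reindex_inj (@perm_inj _ p)).
  by rewrite -mulr_sumr sum_hp0 mulr0.
rewrite (bigD1 j) //= (eq_bigr _ eq_T).
have -> : \sum_(j'' | j'' != j) T = T * (n%:R - 1).
  have sumT : \sum_(j'' : 'I_n) T = T + \sum_(j'' | j'' != j) T by rewrite (bigD1 j).
  rewrite sumr_const card_ord in sumT.
  by rewrite mulrBr mulr1 mulr_natr sumT addrC addKr.
have : 0 <= Eperm (fun p => h (p j) * h (p j)) by apply: Eperm_ge0 => p; rewrite -expr2 sqr_ge0.
have : 1 < n%:R :> R by rewrite ltr1n.
nra.
Qed.

Lemma Eperm_sqr_wsum_le (h w : 'I_n -> R) : (forall j, 0 <= w j) -> \sum_s h s = 0 ->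
  Eperm (fun p => (\sum_j w j * h (p j)) ^+ 2) <=
    (\sum_j w j ^+ 2) * (n%:R^-1 * \sum_s h s ^+ 2).
Proof.
move=> w_ge0 sum_h0.
have sqrE (p : {perm 'I_n}) : (\sum_j w j * h (p j)) ^+ 2 =
    \sum_j \sum_j' w j * w j' * (h (p j) * h (p j')).
  rewrite expr2 mulr_suml; apply: eq_bigr => j _.
  by rewrite mulr_sumr; apply: eq_bigr => j' _; ring.
rewrite (eq_Eperm sqrE) Eperm_sum mulr_suml; apply: ler_sum => j _.
rewrite Eperm_sum (bigD1 j) //= EpermZ -expr2.
under eq_Eperm do rewrite -expr2.
rewrite (Eperm_eval (fun s => h s ^+ 2)) -[X in _ <= X]addr0 lerD2l.
apply: sumr_le0 => j' neq_j'j; rewrite EpermZ.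
by apply: mulr_ge0_le0; rewrite ?mulr_ge0 // Eperm_cross_le0 // eq_sym.
Qed.

End UniformPermutation.

Section MiniBatches.
Variables (R : realType) (n b : nat).
Hypothesis b_gt0 : (0 < b)%N.

(* Batches and positions are counted from 0, unlike the paper's [i] and [j]. *)
Definition in_batch (t j : nat) : bool := (t * b <= j < t.+1 * b)%N.

Lemma in_batchE t j : in_batch t j = (t == j %/ b)%N.
Proof. by rewrite /in_batch eqn_leq leq_divRL // -[(j %/ b <= t)%N]ltnS ltn_divLR. Qed.

Lemma sum_in_batch_le1 i j : \sum_(t < i) (in_batch t j)%:R <= 1 :> R.
Proof.
case: (pickP (fun t : 'I_i => in_batch t j)) => [t0 t0j | none]; last first.
  by rewrite big1 ?ler01 // => t _; rewrite none.
rewrite (bigD1 t0) //= t0j big1 ?addr0 // => t neq_tt0.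
move: t0j; rewrite !in_batchE => /eqP t0E.
by case: eqP => // tE; move: neq_tt0; rewrite -val_eqE /= tE t0E eqxx.
Qed.

Lemma card_batch t : (t.+1 * b <= n)%N -> \sum_(j < n | in_batch t j) 1 = b%:R :> R.
Proof.
move=> le_tn; rewrite -(big_mkord (in_batch t) (fun=> 1)) /in_batch.
rewrite -(big_nat_widen _ _ _ (fun j => t * b <= j)%N) //.
rewrite (big_cat_nat _ (n := t * b)) //=; last by rewrite leq_mul2r leqnSn orbT.
rewrite big_nat_cond big1 ?add0r; last by move=> j /andP[/andP[_ lt_j] le_j]; lia.
rewrite big_nat_cond (eq_bigl (fun j => (t * b <= j < t.+1 * b)%N && true)); last first.
  by move=> j /=; case: (t * b <= j)%N; rewrite ?andbT.
by rewrite -big_nat_cond sumr_const_nat mulSnr addKn.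
Qed.

End MiniBatches.

Definition batch_grad (R : realType) (n d : nat) (grad : 'I_n -> 'rV[R]_d -> 'rV[R]_d)
    (b : nat) (p : {perm 'I_n}) (t : nat) (y : 'rV[R]_d) : 'rV[R]_d :=
  b%:R^-1 *: \sum_(j < n | in_batch b t j) grad (p j) y.

Lemma dirE (R : realType) (n d : nat) (grad : 'I_n -> 'rV[R]_d -> 'rV[R]_d) (b : nat)
    (beta lam al : R) (p : {perm 'I_n}) (x xt : 'rV[R]_d) (t : nat) :
  dir grad b beta lam p al x xt t.+1 =
    batch_grad grad b p t (yhat grad b beta lam p al x xt t.+1).
Proof. by []. Qed.

Lemma sum_grad_sub_gradf (R : realType) (n d : nat) (grad : 'I_n -> 'rV[R]_d -> 'rV[R]_d)
    (z : 'rV[R]_d) : (0 < n)%N -> \sum_s (grad s z - gradf grad z) = 0.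
Proof.
move=> n_gt0; rewrite sumrB sumr_const card_ord /gradf -scaler_nat scalerA.
by rewrite mulfV ?scale1r ?subrr // pnatr_eq0 -lt0n.
Qed.

Section BatchGradientBounds.
Variables (R : realType) (n d b m i : nat) (grad : 'I_n -> 'rV[R]_d -> 'rV[R]_d).
Variables (a : 'I_i -> R) (z : 'rV[R]_d).
Hypotheses (n_gt0 : (0 < n)%N) (b_gt0 : (0 < b)%N) (mbE : (m * b = n)%N).
Hypotheses (i_le_m : (i <= m)%N) (a_ge0 : forall t, 0 <= a t).

Let a1 := \sum_(t < i) `|a t|.
Let ainf := \big[Num.max/0]_(t < i) `|a t|.

(* [\sum_t a t *: batch_grad p t _] weighs [grad (p j)] by [batch_weight t j]. *)
Definition batch_weight (t : 'I_i) (j : 'I_n) : R :=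
  if in_batch b t j then a t / b%:R else 0.

Definition position_weight (j : 'I_n) : R := \sum_t batch_weight t j.

Definition sampling_noise (p : {perm 'I_n}) : 'rV[R]_d :=
  \sum_j position_weight j *: (grad (p j) z - gradf grad z).

Definition drift (p : {perm 'I_n}) (y : nat -> 'rV[R]_d) : 'rV[R]_d :=
  \sum_(u : 'I_i * 'I_n) batch_weight u.1 u.2 *: (grad (p u.2) (y u.1) - grad (p u.2) z).

Lemma a1_ge0 : 0 <= a1.
Proof. by apply: sumr_ge0 => t _; exact: normr_ge0. Qed.

Lemma ainf_ge0 : 0 <= ainf.
Proof. exact: bigmax_ge_id. Qed.

Lemma le_ainf t : a t <= ainf.
Proof. by rewrite -(ger0_norm (a_ge0 t)) (le_bigmax _ (fun t => `|a t|)). Qed.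

Lemma batch_weight_ge0 t j : 0 <= batch_weight t j.
Proof. by rewrite /batch_weight; case: ifP => // _; rewrite divr_ge0 ?ler0n. Qed.

(* Every batch [t < i <= m] lies inside [0, n) because [m * b = n]. *)
Lemma sum_batch_weight t : \sum_j batch_weight t j = a t.
Proof.
rewrite /batch_weight -big_mkcond /=.
under eq_bigr do rewrite -[a t / _]mulr1.
rewrite -mulr_sumr card_batch //; last first.
  by rewrite -mbE leq_mul2r (leq_trans (ltn_ord t) i_le_m) orbT.
by rewrite divfK // pnatr_eq0 -lt0n.
Qed.

Lemma position_weight_ge0 j : 0 <= position_weight j.
Proof. by apply: sumr_ge0 => t _; exact: batch_weight_ge0. Qed.

Lemma position_weight_le j : position_weight j <= ainf / b%:R.
Proof.
apply: (@le_trans _ _ (\sum_(t < i) (in_batch b t j)%:R * (ainf / b%:R))).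
  apply: ler_sum => t _; rewrite /batch_weight; case: in_batch; rewrite ?mul1r ?mul0r //.
  by rewrite ler_pM2r ?le_ainf // invr_gt0 ltr0n.
rewrite -mulr_suml ler_piMl ?divr_ge0 ?ainf_ge0 ?ler0n //.
exact: sum_in_batch_le1.
Qed.

Lemma sum_position_weight : \sum_j position_weight j = a1.
Proof.
rewrite /position_weight exchange_big /=.
by apply: eq_bigr => t _; rewrite sum_batch_weight ger0_norm.
Qed.

Lemma sum_pair_batch_weight : \sum_(u : 'I_i * 'I_n) batch_weight u.1 u.2 = a1.
Proof.
by rewrite -(pair_bigA _ batch_weight) -sum_position_weight exchange_big.
Qed.

Lemma weighted_batch_sumE p (y : nat -> 'rV[R]_d) :
  \sum_(t < i) a t *: batch_grad grad b p t (y t) =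
    drift p y + sampling_noise p + a1 *: gradf grad z.
Proof.
have batchE t : a t *: batch_grad grad b p t (y t) =
    \sum_j batch_weight t j *: grad (p j) (y t).
  rewrite /batch_grad scalerA big_mkcond scaler_sumr; apply: eq_bigr => j _.
  by rewrite /batch_weight; case: ifP; rewrite ?scale0r ?scaler0.
have splitE t j : batch_weight t j *: grad (p j) (y t) =
    batch_weight t j *: (grad (p j) (y t) - grad (p j) z)
    + batch_weight t j *: (grad (p j) z - gradf grad z) + batch_weight t j *: gradf grad z.
  by rewrite -!scalerDr subrKA subrK.
under eq_bigr => t _ do rewrite batchE (eq_bigr _ (fun j _ => splitE t j)) !big_split.
rewrite !big_split /=; congr (_ + _ + _).
- by rewrite /drift pair_bigA.
- rewrite /sampling_noise exchange_big /=.
  by apply: eq_bigr => j _; rewrite /position_weight scaler_suml.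
- rewrite -sum_pair_batch_weight -pair_bigA scaler_suml.
  by apply: eq_bigr => t _; rewrite scaler_suml.
Qed.

Section Lipschitz.
Variable L : R.
Hypothesis grad_lip : forall s x y, enorm (grad s x - grad s y) <= L * enorm (x - y).

Lemma sqnorm_drift_le p (y : nat -> 'rV[R]_d) :
  sqnorm (drift p y) <= a1 * ainf * (L ^+ 2 * \sum_(t < m) sqnorm (y t - z)).
Proof.
apply: le_trans (sqnorm_wsum_le _ (fun u => batch_weight_ge0 u.1 u.2)) _.
rewrite sum_pair_batch_weight -mulrA ler_wpM2l ?a1_ge0 //.
apply: (@le_trans _ _ (\sum_(t < i) a t * (L ^+ 2 * sqnorm (y t - z)))).
  rewrite -(pair_bigA _ (fun t j => batch_weight t j * sqnorm (grad (p j) (y t) - grad (p j) z))).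
  apply: ler_sum => t _; rewrite -(sum_batch_weight t) mulr_suml.
  by apply: ler_sum => j _; rewrite ler_wpM2l ?batch_weight_ge0 ?sqnorm_le_of_enorm_le.
apply: (@le_trans _ _ (\sum_(t < i) ainf * (L ^+ 2 * sqnorm (y t - z)))).
  by apply: ler_sum => t _; rewrite ler_wpM2r ?le_ainf // mulr_ge0 ?sqr_ge0 ?sqnorm_ge0.
rewrite -!mulr_sumr ler_wpM2l ?ainf_ge0 // ler_wpM2l ?sqr_ge0 //.
rewrite (big_ord_widen _ (fun t => sqnorm (y t - z)) i_le_m).
rewrite [X in _ <= X](bigID (fun t : 'I_m => (t < i)%N)) /= lerDl.
by apply: sumr_ge0 => t _; exact: sqnorm_ge0.
Qed.

Lemma sqnorm_weighted_batch_sum_le p (y : nat -> 'rV[R]_d) :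
  sqnorm (\sum_(t < i) a t *: batch_grad grad b p t (y t)) <=
    3 * (a1 * ainf * (L ^+ 2 * \sum_(t < m) sqnorm (y t - z))
         + sqnorm (sampling_noise p) + a1 ^+ 2 * sqnorm (gradf grad z)).
Proof.
rewrite weighted_batch_sumE; apply: le_trans (sqnormD3_le _ _ _) _.
by rewrite ler_wpM2l // sqnormZ !lerD2r sqnorm_drift_le.
Qed.

End Lipschitz.

Lemma sqnorm_sampling_noise_le p :
  sqnorm (sampling_noise p) <= a1 * ainf * (m%:R * sigma2 grad z).
Proof.
apply: le_trans (sqnorm_wsum_le _ position_weight_ge0) _.
rewrite sum_position_weight -mulrA ler_wpM2l ?a1_ge0 //.
apply: (@le_trans _ _ (\sum_j ainf / b%:R * sqnorm (grad (p j) z - gradf grad z))).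
  by apply: ler_sum => j _; rewrite ler_wpM2r ?sqnorm_ge0 ?position_weight_le.
have sum_pE : \sum_j sqnorm (grad (p j) z - gradf grad z) =
    \sum_s sqnorm (grad s z - gradf grad z) by rewrite [RHS](reindex_inj (@perm_inj _ p)).
rewrite -mulr_sumr sum_pE.
suff -> : ainf * (m%:R * sigma2 grad z) =
    ainf / b%:R * \sum_s sqnorm (grad s z - gradf grad z) by [].
have nE : n%:R = m%:R * b%:R :> R by rewrite -natrM mbE.
have m_gt0 : (0 < m)%N by move: n_gt0; rewrite -mbE muln_gt0 => /andP[].
rewrite /sigma2 nE; field.
by rewrite !pnatr_eq0 -!lt0n m_gt0 b_gt0.
Qed.

Lemma Eperm_sqnorm_sampling_noise_le :
  Eperm (fun p => sqnorm (sampling_noise p)) <= a1 * ainf * (b%:R^-1 * sigma2 grad z).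
Proof.
set g := fun s => grad s z - gradf grad z.
have sum_g0 c : \sum_s g s 0 c = 0.
  by rewrite -summxE sum_grad_sub_gradf // mxE.
under eq_Eperm do rewrite sqnorm_wsumE.
rewrite Eperm_sum.
apply: (@le_trans _ _ (\sum_c (\sum_j position_weight j ^+ 2) * (n%:R^-1 * \sum_s g s 0 c ^+ 2))).
  by apply: ler_sum => c _; exact: Eperm_sqr_wsum_le position_weight_ge0 (sum_g0 c).
rewrite -mulr_sumr.
have sigma2E : \sum_c n%:R^-1 * \sum_s g s 0 c ^+ 2 = sigma2 grad z.
  by rewrite -mulr_sumr exchange_big.
rewrite sigma2E [X in _ <= X]mulrA ler_wpM2r //.
  by rewrite mulr_ge0 ?invr_ge0 ?ler0n ?sumr_ge0 // => s _; exact: sqnorm_ge0.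
apply: (@le_trans _ _ (\sum_j position_weight j * (ainf / b%:R))).
  by apply: ler_sum => j _; rewrite expr2 ler_wpM2l ?position_weight_ge0 ?position_weight_le.
by rewrite -mulr_suml sum_position_weight mulrA.
Qed.

End BatchGradientBounds.

Theorem lemmaB1 (R : realType) (n d b : nat)
  (f : 'I_n -> 'rV[R]_d -> R) (grad : 'I_n -> 'rV[R]_d -> 'rV[R]_d)
  (L : R) (beta lam : R) (alpha : nat -> R)
  (pi : nat -> {perm 'I_n}) (x1 : 'rV[R]_d) :
  (0 < n)%N -> (0 < b)%N -> (b %| n)%N ->
  (* f_i continuously differentiable with gradient grad i *)
  (forall i x, differentiable (f i) x) ->
  (forall i x v, is_derive x v (f i) (dotv (grad i x) v)) ->
  (forall i, continuous (grad i)) ->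
  (* (A.a) *)
  0 < L ->
  (forall i x y, enorm (grad i x - grad i y) <= L * enorm (x - y)) ->
  (exists fbar : R, forall i x, fbar <= f i x) ->
  0 <= beta -> beta < 1 ->
  (forall k, 0 < alpha k) ->
  let m := (n %/ b)%N in
  let x := xk grad b beta lam m pi alpha x1 in
  let xt := xtk grad b beta lam m pi alpha x1 in
  let z := zk grad b beta lam m pi alpha x1 in
  (* (a): arbitrary permutations *)
  (forall (k i : nat) (a : 'I_i -> R) (p : {perm 'I_n}),
     (1 <= k)%N -> (1 <= i <= m)%N -> (forall t, 0 <= a t) ->
     let a1 : R := \sum_(t < i) `|a t| in
     let ainf : R := \big[Num.max/0]_(t < i) `|a t| in
     sqnorm (\sum_(t < i) a t *: dir grad b beta lam p (alpha k) (x k) (xt k) t.+1)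
     <= 3 * a1 * ainf *
          (L ^+ 2 * \sum_(t < m) sqnorm (yhat grad b beta lam p (alpha k) (x k) (xt k) t.+1 - z k)
           + m%:R * sigma2 grad (z k))
        + 3 * a1 ^+ 2 * sqnorm (gradf grad (z k)))
  /\
  (* (b): under (A.c), E_k = uniform average over pi^k *)
  (forall (k i : nat) (a : 'I_i -> R),
     (1 <= k)%N -> (1 <= i <= m)%N -> (forall t, 0 <= a t) ->
     let a1 : R := \sum_(t < i) `|a t| in
     let ainf : R := \big[Num.max/0]_(t < i) `|a t| in
     Eperm (fun p => sqnorm (\sum_(t < i) a t *: dir grad b beta lam p (alpha k) (x k) (xt k) t.+1))
     <= 3 * a1 * ainf *
          (L ^+ 2 * \sum_(t < m)
              Eperm (fun p => sqnorm (yhat grad b beta lam p (alpha k) (x k) (xt k) t.+1 - z k))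
           + b%:R^-1 * sigma2 grad (z k))
        + 3 * a1 ^+ 2 * sqnorm (gradf grad (z k))).
Proof.
move=> n_gt0 b_gt0 b_dvd_n _ _ _ _ grad_lip _ _ _ _ m x xt z.
have mbE : (m * b = n)%N by rewrite divnK.
have batch_le k i (a : 'I_i -> R) p : (i <= m)%N -> (forall t, 0 <= a t) ->
    sqnorm (\sum_(t < i) a t *: dir grad b beta lam p (alpha k) (x k) (xt k) t.+1) <=
    3 * ((\sum_(t < i) `|a t|) * \big[Num.max/0]_(t < i) `|a t| *
           (L ^+ 2 * \sum_(t < m) sqnorm (yhat grad b beta lam p (alpha k) (x k) (xt k) t.+1 - z k))
         + sqnorm (sampling_noise b grad a (z k) p)
         + (\sum_(t < i) `|a t|) ^+ 2 * sqnorm (gradf grad (z k))).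
  move=> i_le_m a_ge0; under eq_bigr do rewrite dirE.
  exact: (sqnorm_weighted_batch_sum_le (z k) b_gt0 mbE i_le_m a_ge0 grad_lip p
    (fun t => yhat grad b beta lam p (alpha k) (x k) (xt k) t.+1)).
split=> [k i a p _ /andP[_ i_le_m] a_ge0 | k i a _ /andP[_ i_le_m] a_ge0] /=.
- have := batch_le k i a p i_le_m a_ge0.
  have := sqnorm_sampling_noise_le grad (z k) n_gt0 b_gt0 mbE i_le_m a_ge0 p.
  lra.
- apply: le_trans (ler_Eperm (fun p => batch_le k i a p i_le_m a_ge0)) _.
  have := Eperm_sqnorm_sampling_noise_le grad (z k) n_gt0 b_gt0 mbE i_le_m a_ge0.
  rewrite !(EpermZ, EpermD, Eperm_sum, Eperm_cst); lra.
Qed.
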